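(* Let $U:[1,\infty)\to\mathbb R_+$ be increasing to infinity, continuously differentiable, and regularly varying with index $\gamma\ge0$. For $t$ with $U(t)>1$, let $m(t)$ be the $y\ge 1$ such that $U(t/y)=y$. Then: (i) $m$ is well-defined and increasing; (ii) $m$ is continuously differentiable; (iii) $m(t)\to\infty$ and $t/m(t)\to\infty$ as $t\to\infty$; (iv) $m$ is regularly varying with index $\gamma/(\gamma+1)$. Moreover, if $U(t)=t^\gamma L(t)$ with $L$ slowly varying, then, letting $L_1(t)=L(t^{1/(1+\gamma)})$ and $L_1^*$ be a De Bruijn conjugate of $L_1$, $$m(t)\sim t^{\gamma/(\gamma+1)}\,L_1^*(t)^{-1/(1+\gamma)}\quad\text{as } t\to\infty.$$
   Context: A measurable $h:\mathbb R_+\to\mathbb R_+$ is regularly varying with index $\alpha$ if $h(tx)/h(t)\to x^\alpha$ as $t\to\infty$ for every $x>0$; slowly varying means index $0$. For $L$ slowly varying, a De Bruijn conjugate is a slowly varying function $L^*$ with $L^*(x)L(xL^*(x))\to1$ and $L(x)L^*(xL(x))\to1$ as $x\to\infty$ (it exists and is unique up to asymptotic equivalence). $a\sim b$ means $a/b\to1$. *)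

From Stdlib Require Import Reals.
From Coquelicot Require Import Coquelicot.
Open Scope R_scope.

Definition reg_var (h : R -> R) (a : R) : Prop :=
  forall x, 0 < x -> is_lim (fun t => h (t * x) / h t) p_infty (Finite (Rpower x a)).

Definition slow_var (h : R -> R) : Prop := reg_var h 0.

Definition debruijn_conj (L Ls : R -> R) : Prop :=
  (forall x, 0 < x -> 0 < Ls x) /\ slow_var Ls /\
  is_lim (fun x => Ls x * L (x * Ls x)) p_infty (Finite 1) /\
  is_lim (fun x => L x * Ls (x * L x)) p_infty (Finite 1).

Definition C1_on (P : R -> Prop) (f f' : R -> R) : Prop :=
  forall t, P t ->
    (forall eps, 0 < eps -> exists delta, 0 < delta /\
       forall s, P s -> s <> t -> Rabs (s - t) < delta ->
         Rabs ((f s - f t) / (s - t) - f' t) < eps) /\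
    (forall eps, 0 < eps -> exists delta, 0 < delta /\
       forall s, P s -> Rabs (s - t) < delta -> Rabs (f' s - f' t) < eps).

Definition m_dom (U : R -> R) (t : R) : Prop := 1 <= t /\ 1 < U t /\ U 1 <= t.

From Stdlib Require Import Reals Lra ClassicalEpsilon.
From Coquelicot Require Import Coquelicot.
Open Scope R_scope.

(* Writing [x = t / y], the equation [U (t / y) = y] becomes [x U(x) = t].  Since
   [x ↦ x U(x)] is strictly increasing and continuous on [[1, ∞)], it has an inverse
   [X], and [m = U ∘ X = t / X].  The derivative of [x U(x)] is [U + x U' ≥ 1] on the
   range of [X], so the inverse-function and chain rules for difference quotients make
   [m] continuously differentiable.  [x U(x)] is regularly varying of index [1 + γ];
   squeezing [X(t a)] between [d X(t)] for [d^(1+γ)] slightly above and below [a] shows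
   that [X] has index [1/(1+γ)], hence [m = t / X] has index [γ/(γ+1)].  Finally, for
   [s = X(t)^(1+γ)] one has [L_1(s) = L(X)] and [s L_1(s) = t], so the De Bruijn relation
   gives [L(X) L_1^*(t) → 1], while the normalized ratio of the statement is exactly
   [(L(X) L_1^*(t))^(1/(1+γ))]. *)

Section FilterArith.
Context {T : Type} {F : (T -> Prop) -> Prop} {FF : Filter F}.

Lemma filterlim_Rplus f g a b :
  filterlim f F (locally a) -> filterlim g F (locally b) ->
  filterlim (fun x => f x + g x) F (locally (a + b)).
Proof. intros Hf Hg. exact (filterlim_comp_2 f g Rplus Hf Hg (filterlim_plus a b)). Qed.

Lemma filterlim_Rmult f g a b :
  filterlim f F (locally a) -> filterlim g F (locally b) ->
  filterlim (fun x => f x * g x) F (locally (a * b)).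
Proof. intros Hf Hg. exact (filterlim_comp_2 f g Rmult Hf Hg (filterlim_mult a b)). Qed.

Lemma filterlim_Rinv f a :
  a <> 0 -> filterlim f F (locally a) -> filterlim (fun x => / f x) F (locally (/ a)).
Proof.
  intros Ha Hf. apply (filterlim_comp _ _ _ f Rinv F (locally a) (locally (/ a)) Hf).
  apply (filterlim_Rbar_inv (Finite a)). congruence.
Qed.

Lemma filterlim_into_within {U : Type} (G : (U -> Prop) -> Prop) (D : U -> Prop) h :
  filterlim h F G -> F (fun x => D (h x)) -> filterlim h F (within D G).
Proof.
  intros Hh HD Q HQ. unfold filtermap. apply (filter_imp (fun x => D (h x) /\ (D (h x) -> Q (h x)))).
  - intros x [Dx HDx]. auto.
  - apply filter_and; [exact HD | exact (Hh _ HQ)].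
Qed.

End FilterArith.

Lemma filterlim_within_epsP (P : R -> Prop) t g l :
  filterlim g (within P (locally t)) (locally l) <->
  forall eps, 0 < eps -> exists d, 0 < d /\
    forall s, P s -> Rabs (s - t) < d -> Rabs (g s - l) < eps.
Proof.
  split.
  - intros H eps Heps.
    destruct (H (fun y => Rabs (y - l) < eps)) as [d Hd].
    { exists (mkposreal eps Heps). intros y Hy. exact Hy. }
    exists d. split; [apply cond_pos | intros s Ps Hs; apply Hd; auto].
  - intros H Q [eps HQ].
    destruct (H eps (cond_pos eps)) as [d [Hd Hd']].
    exists (mkposreal d Hd). intros s Hs Ps. apply HQ, Hd'; auto.
Qed.

Lemma filterlim_within_id (P : R -> Prop) t :
  filterlim (fun s => s) (within P (locally t)) (locally t).
Proof. intros Q [e HQ]. exists e. intros s Hs _. exact (HQ s Hs). Qed.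

Lemma filterlim_within_punctured (P : R -> Prop) (G : (R -> Prop) -> Prop) g t :
  filterlim g (within P (locally t)) G ->
  filterlim g (within (fun s => P s /\ s <> t) (locally t)) G.
Proof.
  intros H Q HQ. specialize (H Q HQ). unfold filtermap, within in *.
  apply (filter_imp (fun s => P s -> Q (g s))); [intros s Hs [Ps _]; auto | exact H].
Qed.

Lemma filterlim_within_unpunctured (P : R -> Prop) (g : R -> R) t :
  filterlim g (within (fun s => P s /\ s <> t) (locally t)) (locally (g t)) ->
  filterlim g (within P (locally t)) (locally (g t)).
Proof.
  intros H Q HQ. destruct (H Q HQ) as [d Hd]. exists d. intros s Hs Ps.
  destruct (Req_dec s t) as [->|Hst]; [exact (locally_singleton _ _ HQ) | auto].
Qed.

Definition diff_quot (f : R -> R) (t s : R) : R := (f s - f t) / (s - t).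

Lemma C1_onP (P : R -> Prop) f f' : C1_on P f f' <-> forall t, P t ->
  filterlim (diff_quot f t) (within (fun s => P s /\ s <> t) (locally t)) (locally (f' t)) /\
  filterlim f' (within P (locally t)) (locally (f' t)).
Proof.
  unfold C1_on, diff_quot. split; intros H t Pt; destruct (H t Pt) as [Hd Hc].
  - split; apply filterlim_within_epsP; [|exact Hc].
    intros eps Heps. destruct (Hd eps Heps) as [d [Hd0 Hd1]].
    exists d. split; [exact Hd0 | intros s [Ps Hs]; auto].
  - split; [|apply filterlim_within_epsP, Hc].
    intros eps Heps. destruct (proj1 (filterlim_within_epsP _ _ _ _) Hd eps Heps) as [d [Hd0 Hd1]].
    exists d. split; [exact Hd0 | intros s Ps Hs; apply Hd1; auto].
Qed.

Lemma C1_on_continuous (P : R -> Prop) f f' t : C1_on P f f' -> P t ->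
  filterlim f (within P (locally t)) (locally (f t)).
Proof.
  intros Hf Pt. destruct (proj1 (C1_onP _ _ _) Hf t Pt) as [Hd _].
  apply filterlim_within_unpunctured.
  apply filterlim_within_ext with (fun s => f t + (s - t) * diff_quot f t s).
  { intros s [_ Hs]. unfold diff_quot. field. now apply Rminus_eq_contra. }
  assert (Hl : filterlim (fun s => f t + (s - t) * diff_quot f t s)
    (within (fun s => P s /\ s <> t) (locally t)) (locally (f t + (t - t) * f' t))).
  { apply filterlim_Rplus; [apply filterlim_const |].
    apply filterlim_Rmult; [| exact Hd].
    apply filterlim_Rplus; [| apply filterlim_const].
    apply filterlim_within_punctured, filterlim_within_id. }
  now replace (f t + (t - t) * f' t) with (f t) in Hl by ring.
Qed.

Lemma C1_on_deriv_nonneg a f f' t :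
  C1_on (fun x => a <= x) f f' -> (forall x y, a <= x -> x < y -> f x <= f y) ->
  a <= t -> 0 <= f' t.
Proof.
  intros Hf Hincr Ht. destruct (Rle_lt_dec 0 (f' t)) as [|Hneg]; [assumption | exfalso].
  destruct (proj1 (Hf t Ht) (- f' t)) as [d [Hd Hq]]; [lra |].
  assert (Hq0 : 0 <= (f (t + d / 2) - f t) / (t + d / 2 - t)).
  { assert (f t <= f (t + d / 2)) by (apply Hincr; lra).
    apply Rdiv_le_0_compat; lra. }
  specialize (Hq (t + d / 2) ltac:(lra) ltac:(lra) ltac:(rewrite Rabs_right; lra)).
  revert Hq; split_Rabs; lra.
Qed.

Lemma C1_on_mult_id (P : R -> Prop) f f' : C1_on P f f' ->
  C1_on P (fun x => x * f x) (fun x => f x + x * f' x).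
Proof.
  intros Hf. apply C1_onP. intros t Pt.
  destruct (proj1 (C1_onP _ _ _) Hf t Pt) as [Hd Hc].
  pose proof (C1_on_continuous _ _ _ t Hf Pt) as Hcont.
  split.
  - apply filterlim_within_ext with (fun s => f s + t * diff_quot f t s).
    { intros s [_ Hs]. unfold diff_quot. field. now apply Rminus_eq_contra. }
    apply filterlim_Rplus; [now apply filterlim_within_punctured |].
    apply filterlim_Rmult; [apply filterlim_const | exact Hd].
  - apply filterlim_Rplus; [exact Hcont |].
    apply filterlim_Rmult; [apply filterlim_within_id | exact Hc].
Qed.

Lemma filterlim_within_mapsto (P Q : R -> Prop) h t :
  filterlim h (within Q (locally t)) (locally (h t)) -> (forall s, Q s -> P (h s)) ->
  filterlim h (within Q (locally t)) (within P (locally (h t))).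
Proof.
  intros Hh HP. apply filterlim_into_within; [exact Hh |].
  unfold within. apply filter_forall. exact HP.
Qed.

Lemma filterlim_punctured_mapsto (P Q : R -> Prop) h t :
  filterlim h (within Q (locally t)) (locally (h t)) -> (forall s, Q s -> P (h s)) ->
  (forall s, Q s -> h s = h t -> s = t) ->
  filterlim h (within (fun s => Q s /\ s <> t) (locally t))
    (within (fun y => P y /\ y <> h t) (locally (h t))).
Proof.
  intros Hh HP Hinj. apply filterlim_into_within; [now apply filterlim_within_punctured |].
  unfold within. apply filter_forall. intros s [Qs Hst]. split; [auto | intro E; apply Hst; auto].
Qed.

Lemma C1_on_comp (P Q : R -> Prop) g g' h h' :
  C1_on P g g' -> C1_on Q h h' -> (forall s, Q s -> P (h s)) ->
  (forall s t, Q s -> Q t -> h s = h t -> s = t) ->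
  C1_on Q (fun s => g (h s)) (fun s => g' (h s) * h' s).
Proof.
  intros Hg Hh HP Hinj. apply C1_onP. intros t Qt.
  destruct (proj1 (C1_onP _ _ _) Hg (h t) (HP t Qt)) as [Dg Cg].
  destruct (proj1 (C1_onP _ _ _) Hh t Qt) as [Dh Ch].
  pose proof (C1_on_continuous _ _ _ t Hh Qt) as Hcont.
  split.
  - apply filterlim_within_ext with (fun s => diff_quot g (h t) (h s) * diff_quot h t s).
    { intros s [Qs Hst]. unfold diff_quot.
      assert (h s <> h t) by (intro E; apply Hst, Hinj; auto).
      field. split; now apply Rminus_eq_contra. }
    apply filterlim_Rmult; [| exact Dh].
    eapply filterlim_comp; [apply (filterlim_punctured_mapsto P) | exact Dg]; auto.
  - apply filterlim_Rmult; [| exact Ch].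
    eapply filterlim_comp; [apply (filterlim_within_mapsto P) | exact Cg]; auto.
Qed.

Lemma C1_on_inverse (P Q : R -> Prop) f f' h :
  C1_on P f f' -> (forall s, Q s -> P (h s) /\ f (h s) = s) ->
  (forall s, Q s -> f' (h s) <> 0) ->
  (forall t, Q t -> filterlim h (within Q (locally t)) (locally (h t))) ->
  C1_on Q h (fun s => / f' (h s)).
Proof.
  intros Hf Hh Hnz Hcont. apply C1_onP. intros t Qt.
  destruct (Hh t Qt) as [Pt Ht].
  assert (Hinj : forall s, Q s -> h s = h t -> s = t).
  { intros s Qs E. now rewrite <- (proj2 (Hh s Qs)), E, Ht. }
  destruct (proj1 (C1_onP _ _ _) Hf (h t) Pt) as [Df Cf].
  split.
  - apply filterlim_within_ext with (fun s => / diff_quot f (h t) (h s)).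
    { intros s [Qs Hst]. unfold diff_quot. rewrite (proj2 (Hh s Qs)), Ht.
      assert (h s <> h t) by (intro E; apply Hst, Hinj; auto).
      field. split; now apply Rminus_eq_contra. }
    apply filterlim_Rinv; [now apply Hnz |].
    eapply filterlim_comp; [apply (filterlim_punctured_mapsto P) | exact Df]; auto.
    intros s Qs. apply Hh, Qs.
  - apply filterlim_Rinv; [now apply Hnz |].
    eapply filterlim_comp; [apply (filterlim_within_mapsto P) | exact Cf]; auto.
    intros s Qs. apply Hh, Qs.
Qed.

Lemma eventually_scale (P : R -> Prop) x : 0 < x ->
  Rbar_locally p_infty P -> Rbar_locally p_infty (fun t => P (t * x)).
Proof.
  intros Hx [M HM]. exists (M / x). intros t Ht. apply HM.
  apply (Rmult_lt_compat_r x) in Ht; [|exact Hx].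
  unfold Rdiv in Ht. now rewrite Rmult_assoc, Rinv_l, Rmult_1_r in Ht by lra.
Qed.

Lemma eventually_gt (h : R -> R) b :
  filterlim h (Rbar_locally p_infty) (Rbar_locally p_infty) ->
  Rbar_locally p_infty (fun t => b < h t).
Proof. intros Hh. apply Hh. exists b. auto. Qed.

Lemma reg_var_eventually_ext f g r :
  Rbar_locally p_infty (fun t => f t = g t) -> reg_var f r -> reg_var g r.
Proof.
  intros Hfg Hf x Hx. apply (filterlim_ext_loc (fun t => f (t * x) / f t)); [| exact (Hf x Hx)].
  generalize (filter_and _ _ Hfg (eventually_scale _ x Hx Hfg)). apply filter_imp.
  intros t [E Ex]. now rewrite E, Ex.
Qed.

Lemma reg_var_mult_id f r : Rbar_locally p_infty (fun t => 0 < f t) ->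
  reg_var f r -> reg_var (fun t => t * f t) (1 + r).
Proof.
  intros Hpos Hf x Hx.
  apply (filterlim_ext_loc (fun t => x * (f (t * x) / f t))).
  - assert (Ht : Rbar_locally p_infty (fun t => 0 < t)) by (exists 0; auto).
    generalize (filter_and _ _ Ht Hpos). apply filter_imp. intros t [Ht0 Hft]. field. lra.
  - rewrite Rpower_plus, Rpower_1 by exact Hx.
    apply filterlim_Rmult; [apply filterlim_const | exact (Hf x Hx)].
Qed.

Lemma reg_var_id_div f r : Rbar_locally p_infty (fun t => 0 < f t) ->
  reg_var f r -> reg_var (fun t => t / f t) (1 - r).
Proof.
  intros Hpos Hf x Hx.
  apply (filterlim_ext_loc (fun t => x * / (f (t * x) / f t))).
  - assert (Ht : Rbar_locally p_infty (fun t => 0 < t)) by (exists 0; auto).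
    generalize (filter_and _ _ Ht (filter_and _ _ Hpos (eventually_scale _ x Hx Hpos))).
    apply filter_imp. intros t [Ht0 [Hft Hftx]]. field. lra.
  - unfold Rminus. rewrite Rpower_plus, Rpower_Ropp, Rpower_1 by exact Hx.
    apply filterlim_Rmult; [apply filterlim_const |].
    apply filterlim_Rinv; [apply Rgt_not_eq, exp_pos | exact (Hf x Hx)].
Qed.

Lemma Rpower_base_1 z : Rpower 1 z = 1.
Proof. unfold Rpower. now rewrite ln_1, Rmult_0_r, exp_0. Qed.

Lemma Rpower_continuous_at_1 k : filterlim (fun y => Rpower y k) (locally 1) (locally 1).
Proof.
  assert (C : continuity_pt (fun y => Rpower y k) 1).
  { apply derivable_continuous_pt. exists (k * Rpower 1 (k - 1)).
    apply derivable_pt_lim_power. lra. }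
  apply continuity_pt_filterlim in C. now rewrite Rpower_base_1 in C.
Qed.

Lemma Rpower_tends_to_infty k : 1 <= k ->
  filterlim (fun y => Rpower y k) (Rbar_locally p_infty) (Rbar_locally p_infty).
Proof.
  intros Hk P [B HB]. exists (Rmax 1 B). intros y Hy. apply HB.
  pose proof (Rmax_l 1 B). pose proof (Rmax_r 1 B).
  assert (Hyk : Rpower y 1 <= Rpower y k) by (apply Rle_Rpower; lra).
  rewrite Rpower_1 in Hyk by lra. lra.
Qed.

Lemma Rpower_normalized_ratio X l s g t : 0 < X -> 0 < l -> 0 < s -> 0 <= g ->
  t = Rpower X (1 + g) * l ->
  Rpower X g * l / (Rpower t (g / (g + 1)) * Rpower s (- (1 / (1 + g))))
  = Rpower (l * s) (1 / (1 + g)).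
Proof.
  intros HX Hl Hs Hg ->. unfold Rpower.
  rewrite ln_mult, ln_exp, ln_mult by (try apply exp_pos; assumption).
  rewrite <- (exp_ln l) at 1 by exact Hl.
  unfold Rdiv. rewrite <- exp_plus, <- exp_plus, <- exp_Ropp, <- exp_plus.
  f_equal. field. lra.
Qed.

Section IncreasingInverse.
Variables (a : R) (f h : R -> R) (Q : R -> Prop).
Hypothesis f_incr : forall x y, a <= x -> x < y -> f x < f y.
Hypothesis h_inverse : forall s, Q s -> a <= h s /\ f (h s) = s.

Lemma inverse_lt_of_lt s y : Q s -> a <= y -> s < f y -> h s < y.
Proof.
  intros Qs Hy Hsy. destruct (h_inverse s Qs) as [Ha Hs].
  destruct (Rlt_le_dec (h s) y) as [|[Hlt | E]]; [assumption | exfalso ..].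
  - pose proof (f_incr _ _ Hy Hlt). lra.
  - rewrite <- E in Hs. lra.
Qed.

Lemma inverse_gt_of_gt s y : Q s -> a <= y -> f y < s -> y < h s.
Proof.
  intros Qs Hy Hsy. destruct (h_inverse s Qs) as [Ha Hs].
  destruct (Rlt_le_dec y (h s)) as [|[Hlt | E]]; [assumption | exfalso ..].
  - pose proof (f_incr _ _ Ha Hlt). lra.
  - rewrite <- E in Hsy. lra.
Qed.

Lemma inverse_unique s y : Q s -> a <= y -> f y = s -> y = h s.
Proof.
  intros Qs Hy Hys. destruct (h_inverse s Qs) as [Ha Hs].
  destruct (Rtotal_order y (h s)) as [Hlt | [E | Hgt]]; [exfalso | exact E | exfalso].
  - pose proof (f_incr _ _ Hy Hlt). lra.
  - pose proof (f_incr _ _ Ha Hgt). lra.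
Qed.

Lemma inverse_incr s t : Q s -> Q t -> s < t -> h s < h t.
Proof.
  intros Qs Qt Hst. destruct (h_inverse t Qt) as [Ha Ht].
  apply inverse_lt_of_lt; [exact Qs | exact Ha | lra].
Qed.

Lemma inverse_continuous t : Q t -> filterlim h (within Q (locally t)) (locally (h t)).
Proof.
  intros Qt. destruct (h_inverse t Qt) as [Ha Ht].
  apply filterlim_within_epsP. intros e He.
  assert (Hup : t < f (h t + e)) by (pose proof (f_incr (h t) (h t + e) Ha ltac:(lra)); lra).
  destruct (Rle_lt_dec a (h t - e)) as [Hlo | Hlo].
  - assert (Hdn : f (h t - e) < t) by (pose proof (f_incr (h t - e) (h t) Hlo ltac:(lra)); lra).
    exists (Rmin (f (h t + e) - t) (t - f (h t - e))). split; [apply Rmin_pos; lra |].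
    intros s Qs Hs.
    pose proof (Rmin_l (f (h t + e) - t) (t - f (h t - e))).
    pose proof (Rmin_r (f (h t + e) - t) (t - f (h t - e))).
    assert (h s < h t + e) by (apply inverse_lt_of_lt; [exact Qs | lra | revert Hs; split_Rabs; lra]).
    assert (h t - e < h s) by (apply inverse_gt_of_gt; [exact Qs | lra | revert Hs; split_Rabs; lra]).
    apply Rabs_def1; lra.
  - exists (f (h t + e) - t). split; [lra |].
    intros s Qs Hs. pose proof (proj1 (h_inverse s Qs)).
    assert (h s < h t + e) by (apply inverse_lt_of_lt; [exact Qs | lra | revert Hs; split_Rabs; lra]).
    apply Rabs_def1; lra.
Qed.

Hypothesis Q_eventually : Rbar_locally p_infty Q.

Lemma inverse_tends_to_infty : filterlim h (Rbar_locally p_infty) (Rbar_locally p_infty).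
Proof.
  intros P [B HB]. destruct Q_eventually as [M HM].
  exists (Rmax M (f (Rmax a B))). intros s Hs. apply HB.
  pose proof (Rmax_l M (f (Rmax a B))). pose proof (Rmax_r M (f (Rmax a B))).
  pose proof (Rmax_r a B).
  assert (Rmax a B < h s) by (apply inverse_gt_of_gt; [apply HM | apply Rmax_l |]; lra).
  lra.
Qed.

Variable rho : R.
Hypothesis rho_pos : 0 < rho.
Hypothesis f_reg_var : reg_var f rho.

Lemma inverse_ratio_lt x d : 0 < x -> 0 < d -> x < Rpower d rho ->
  Rbar_locally p_infty (fun t => h (t * x) < d * h t).
Proof.
  intros Hx Hd Hxd.
  assert (Hrv : Rbar_locally p_infty (fun t => x < f (h t * d) / f (h t))).
  { apply (filterlim_comp _ _ _ h (fun y => f (y * d) / f y) _ _ _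
      inverse_tends_to_infty (f_reg_var d Hd) (fun u => x < u)).
    exact (open_gt x _ Hxd). }
  pose proof (eventually_scale Q x Hx Q_eventually) as Qx.
  pose proof (eventually_gt h (a / d) inverse_tends_to_infty) as Hh.
  assert (Ht : Rbar_locally p_infty (fun t => 0 < t)) by (exists 0; auto).
  generalize (filter_and _ _ Q_eventually (filter_and _ _ Qx (filter_and _ _ Hh (filter_and _ _ Ht Hrv)))).
  apply filter_imp. intros t [Qt [Qtx [Hht [Ht0 Hq]]]].
  rewrite (proj2 (h_inverse t Qt)) in Hq.
  rewrite (Rmult_comm d (h t)). apply inverse_lt_of_lt; [exact Qtx | |].
  - replace a with (a / d * d) by (field; lra). apply Rmult_le_compat_r; lra.
  - replace (f (h t * d)) with (t * (f (h t * d) / t)) by (field; lra).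
    apply Rmult_lt_compat_l; lra.
Qed.

Lemma inverse_ratio_gt x d : 0 < x -> 0 < d -> Rpower d rho < x ->
  Rbar_locally p_infty (fun t => d * h t < h (t * x)).
Proof.
  intros Hx Hd Hxd.
  assert (Hrv : Rbar_locally p_infty (fun t => f (h t * d) / f (h t) < x)).
  { apply (filterlim_comp _ _ _ h (fun y => f (y * d) / f y) _ _ _
      inverse_tends_to_infty (f_reg_var d Hd) (fun u => u < x)).
    exact (open_lt x _ Hxd). }
  pose proof (eventually_scale Q x Hx Q_eventually) as Qx.
  pose proof (eventually_gt h (a / d) inverse_tends_to_infty) as Hh.
  assert (Ht : Rbar_locally p_infty (fun t => 0 < t)) by (exists 0; auto).
  generalize (filter_and _ _ Q_eventually (filter_and _ _ Qx (filter_and _ _ Hh (filter_and _ _ Ht Hrv)))).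
  apply filter_imp. intros t [Qt [Qtx [Hht [Ht0 Hq]]]].
  rewrite (proj2 (h_inverse t Qt)) in Hq.
  rewrite (Rmult_comm d (h t)). apply inverse_gt_of_gt; [exact Qtx | |].
  - replace a with (a / d * d) by (field; lra). apply Rmult_le_compat_r; lra.
  - replace (f (h t * d)) with (t * (f (h t * d) / t)) by (field; lra).
    apply Rmult_lt_compat_l; lra.
Qed.

Lemma inverse_reg_var : reg_var h (/ rho).
Proof.
  intros x Hx. set (c := Rpower x (/ rho)).
  assert (Hc : 0 < c) by apply exp_pos.
  assert (Hcx : Rpower c rho = x).
  { unfold c. rewrite Rpower_mult, Rinv_l, Rpower_1; lra. }
  intros P [eps HP]. pose proof (cond_pos eps) as Heps.
  pose proof (Rmin_l c eps). pose proof (Rmin_r c eps). pose proof (Rmin_pos c eps Hc Heps).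
  assert (Hup := inverse_ratio_lt x (c + eps / 2) Hx ltac:(lra)
    ltac:(rewrite <- Hcx at 1; apply Rlt_Rpower_l; lra)).
  assert (Hlo := inverse_ratio_gt x (c - Rmin c eps / 2) Hx ltac:(lra)
    ltac:(rewrite <- Hcx; apply Rlt_Rpower_l; lra)).
  pose proof (eventually_gt h 0 inverse_tends_to_infty) as Hh.
  change (Rbar_locally p_infty (fun t => P (h (t * x) / h t))).
  generalize (filter_and _ _ Hh (filter_and _ _ Hup Hlo)). apply filter_imp.
  intros t [Hh0 [Hlt Hgt]]. apply HP. change (Rabs (h (t * x) / h t - c) < eps).
  set (r := h (t * x) / h t).
  assert (Er : h (t * x) = r * h t) by (unfold r; field; lra).
  rewrite Er in Hlt, Hgt. apply Rabs_def1; nra.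
Qed.

End IncreasingInverse.

(* Outside [m_dom U] the equation may have no solution; [phi_inv U t] is then unspecified. *)
Definition phi_inv (U : R -> R) (t : R) : R :=
  epsilon (inhabits 0) (fun x => 1 <= x /\ x * U x = t).

Section InverseOfIdTimesU.
Set Default Proof Using "All".
Variables U U' : R -> R.
Hypothesis U_nonneg : forall t, 1 <= t -> 0 <= U t.
Hypothesis U_incr : forall s t, 1 <= s -> s < t -> U s < U t.
Hypothesis U_infty : is_lim U p_infty p_infty.
Hypothesis U_C1 : C1_on (fun t => 1 <= t) U U'.

Lemma id_mult_U_incr x y : 1 <= x -> x < y -> x * U x < y * U y.
Proof.
  intros Hx Hxy. pose proof (U_incr x y Hx Hxy). pose proof (U_nonneg x Hx).
  apply Rle_lt_trans with (x * U y); [apply Rmult_le_compat_l | apply Rmult_lt_compat_r]; lra.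
Qed.

Lemma id_mult_U_C1 : C1_on (fun t => 1 <= t) (fun x => x * U x) (fun x => U x + x * U' x).
Proof. exact (C1_on_mult_id _ _ _ U_C1). Qed.

Lemma id_mult_U_surj t : m_dom U t -> exists x, 1 <= x /\ x * U x = t.
Proof.
  intros [Ht1 [HUt HU1]].
  set (g := fun y => Rmax 1 y * U (Rmax 1 y)).
  assert (Hg : continuity g).
  { intros y. apply continuity_pt_filterlim. unfold g.
    apply (filterlim_comp _ _ _ (Rmax 1) (fun x => x * U x) _
      (within (fun x => 1 <= x) (locally (Rmax 1 y)))).
    - apply filterlim_into_within; [| apply filter_forall, Rmax_l].
      intros P [e HP]. exists e. intros z Hz. apply HP. change (Rabs (Rmax 1 z - Rmax 1 y) < e).
      change (Rabs (z - y) < e) in Hz. revert Hz. unfold Rmax.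
      destruct (Rle_dec 1 z), (Rle_dec 1 y); split_Rabs; lra.
    - apply (C1_on_continuous _ _ _ _ id_mult_U_C1), Rmax_l. }
  assert (Htt : t <= t * U t) by nra.
  destruct (IVT_gen g 1 t t Hg) as [x [Hx Hgx]].
  { unfold g. rewrite (Rmax_left 1 1), (Rmax_right 1 t) by lra.
    split; [apply Rle_trans with (1 * U 1); [apply Rmin_l | lra] |
            apply Rle_trans with (t * U t); [exact Htt | apply Rmax_r]]. }
  rewrite Rmin_left, Rmax_right in Hx by lra.
  exists x. unfold g in Hgx. rewrite Rmax_right in Hgx by lra. split; [lra | exact Hgx].
Qed.

Lemma phi_inv_spec t : m_dom U t -> 1 <= phi_inv U t /\ phi_inv U t * U (phi_inv U t) = t.
Proof. intros Ht. exact (epsilon_spec (inhabits 0) (fun x => 1 <= x /\ x * U x = t) (id_mult_U_surj t Ht)). Qed.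

Lemma U_phi_inv_ge_1 t : m_dom U t -> 1 <= U (phi_inv U t).
Proof.
  intros Ht. destruct (phi_inv_spec t Ht) as [Hx Hxt]. destruct Ht as [Ht1 [HUt _]].
  set (x := phi_inv U t) in *.
  destruct (Rle_lt_dec 1 (U x)) as [| HUx]; [assumption | exfalso].
  assert (Htx : t < x) by (pose proof (U_nonneg x Hx); nra).
  pose proof (U_incr t x Ht1 Htx). lra.
Qed.

Lemma m_dom_eventually : Rbar_locally p_infty (m_dom U).
Proof.
  destruct (U_infty (fun y => 1 < y)) as [M HM]; [exists 1; auto |].
  exists (Rmax M (Rmax 1 (U 1))). intros t Ht.
  pose proof (Rmax_l M (Rmax 1 (U 1))). pose proof (Rmax_r M (Rmax 1 (U 1))).
  pose proof (Rmax_l 1 (U 1)). pose proof (Rmax_r 1 (U 1)).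
  split; [lra | split; [apply HM; lra | lra]].
Qed.

Lemma phi_inv_tends_to_infty :
  filterlim (phi_inv U) (Rbar_locally p_infty) (Rbar_locally p_infty).
Proof. exact (inverse_tends_to_infty _ _ _ _ id_mult_U_incr phi_inv_spec m_dom_eventually). Qed.

Lemma phi_inv_C1 :
  C1_on (m_dom U) (phi_inv U) (fun t => / (U (phi_inv U t) + phi_inv U t * U' (phi_inv U t))).
Proof.
  apply (C1_on_inverse _ _ _ _ _ id_mult_U_C1 phi_inv_spec).
  - intros t Ht. destruct (phi_inv_spec t Ht) as [Hx _].
    pose proof (U_phi_inv_ge_1 t Ht).
    assert (0 <= U' (phi_inv U t)).
    { apply (C1_on_deriv_nonneg 1 U U'); [exact U_C1 | | exact Hx].
      intros a b Ha Hab. left. now apply U_incr. }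
    nra.
  - exact (inverse_continuous _ _ _ _ id_mult_U_incr phi_inv_spec).
Qed.

Lemma U_phi_inv_C1 : C1_on (m_dom U) (fun t => U (phi_inv U t))
  (fun t => U' (phi_inv U t) * / (U (phi_inv U t) + phi_inv U t * U' (phi_inv U t))).
Proof.
  apply (C1_on_comp _ _ _ _ _ _ U_C1 phi_inv_C1).
  - intros t Ht. apply (phi_inv_spec t Ht).
  - intros s t Hs Ht E. now rewrite <- (proj2 (phi_inv_spec s Hs)), E, (proj2 (phi_inv_spec t Ht)).
Qed.

Lemma U_phi_inv_incr s t : m_dom U s -> m_dom U t -> s < t -> U (phi_inv U s) < U (phi_inv U t).
Proof.
  intros Hs Ht Hst. apply U_incr; [apply (phi_inv_spec s Hs) |].
  exact (inverse_incr _ _ _ _ id_mult_U_incr phi_inv_spec s t Hs Ht Hst).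
Qed.

Lemma phi_inv_unique t x : m_dom U t -> 1 <= x -> x * U x = t -> x = phi_inv U t.
Proof. exact (inverse_unique _ _ _ _ id_mult_U_incr phi_inv_spec t x). Qed.

Lemma div_U_phi_inv t : m_dom U t -> t / U (phi_inv U t) = phi_inv U t.
Proof.
  intros Ht. destruct (phi_inv_spec t Ht) as [Hx Hxt]. pose proof (U_phi_inv_ge_1 t Ht).
  rewrite <- Hxt at 1. field. lra.
Qed.

Lemma U_phi_inv_eq t : m_dom U t -> U (phi_inv U t) = t / phi_inv U t.
Proof. intros Ht. destruct (phi_inv_spec t Ht) as [Hx Hxt]. rewrite <- Hxt at 2. field. lra. Qed.

Lemma U_phi_inv_reg_var gamma : 0 <= gamma -> reg_var U gamma ->
  reg_var (fun t => U (phi_inv U t)) (gamma / (gamma + 1)).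
Proof.
  intros Hg Hrv.
  apply reg_var_eventually_ext with (fun t => t / phi_inv U t).
  { apply (filter_imp (m_dom U)); [intros t Ht; now rewrite U_phi_inv_eq | exact m_dom_eventually]. }
  replace (gamma / (gamma + 1)) with (1 - / (1 + gamma)) by (field; lra).
  apply reg_var_id_div; [exact (eventually_gt _ 0 phi_inv_tends_to_infty) |].
  apply (inverse_reg_var 1 (fun x => x * U x) _ (m_dom U)); auto using id_mult_U_incr, phi_inv_spec, m_dom_eventually.
  - lra.
  - apply reg_var_mult_id; [exact (eventually_gt _ 0 U_infty) | exact Hrv].
Qed.

Lemma U_phi_inv_debruijn gamma L L1s : 0 <= gamma ->
  (forall t, 1 <= t -> U t = Rpower t gamma * L t) ->
  debruijn_conj (fun t => L (Rpower t (1 / (1 + gamma)))) L1s ->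
  is_lim (fun t => U (phi_inv U t) /
    (Rpower t (gamma / (gamma + 1)) * Rpower (L1s t) (- (1 / (1 + gamma))))) p_infty (Finite 1).
Proof.
  intros Hg HUL [L1s_pos [_ [_ Hconj]]].
  set (k := 1 / (1 + gamma)).
  set (s := fun t => Rpower (phi_inv U t) (1 + gamma)).
  assert (Hs : filterlim s (Rbar_locally p_infty) (Rbar_locally p_infty)).
  { exact (filterlim_comp _ _ _ _ _ _ _ _ phi_inv_tends_to_infty
      (Rpower_tends_to_infty (1 + gamma) ltac:(lra))). }
  pose proof (filterlim_comp _ _ _ _ (fun y => Rpower y k) _ _ _
    (filterlim_comp _ _ _ s _ _ _ _ Hs Hconj) (Rpower_continuous_at_1 k)) as Hlim.
  eapply filterlim_ext_loc; [| exact Hlim].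
  apply (filter_imp (m_dom U)); [| exact m_dom_eventually].
  intros t Ht. destruct (phi_inv_spec t Ht) as [Hx Hxt]. pose proof (U_phi_inv_ge_1 t Ht) as HUx.
  set (X := phi_inv U t) in *.
  assert (HsX : Rpower (s t) k = X).
  { unfold s, k. fold X. rewrite Rpower_mult. replace ((1 + gamma) * (1 / (1 + gamma))) with 1 by (field; lra).
    apply Rpower_1; lra. }
  assert (HXg : 0 < Rpower X gamma) by apply exp_pos.
  rewrite (HUL X Hx) in Hxt, HUx.
  assert (HLX : 0 < L X) by nra.
  assert (Hst : s t * L X = t).
  { unfold s. fold X. rewrite Rplus_comm, Rpower_plus, Rpower_1 by lra. rewrite <- Hxt. ring. }
  simpl. fold k. rewrite HsX, Hst, (HUL X Hx). symmetry.
  apply Rpower_normalized_ratio; [lra | exact HLX | apply L1s_pos; destruct Ht; lra | exact Hg |].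
  rewrite <- Hst. unfold s. fold X. ring.
Qed.

End InverseOfIdTimesU.


Theorem lemma1 (U U' : R -> R) (gamma : R)
  (Hgamma : 0 <= gamma)
  (Hpos : forall t, 1 <= t -> 0 <= U t)
  (Hinc : forall s t, 1 <= s -> s < t -> U s < U t)
  (Hinf : is_lim U p_infty p_infty)
  (HC1 : C1_on (fun t => 1 <= t) U U')
  (Hrv : reg_var U gamma) :
  exists m : R -> R,
    (* (i) well-defined *)
    (forall t, m_dom U t ->
       1 <= m t /\ 1 <= t / m t /\ U (t / m t) = m t /\
       (forall y, 1 <= y -> 1 <= t / y -> U (t / y) = y -> y = m t)) /\
    (* (i) increasing *)
    (forall s t, m_dom U s -> m_dom U t -> s < t -> m s < m t) /\
    (* (ii) continuously differentiable *)
    (exists m' : R -> R, C1_on (m_dom U) m m') /\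
    (* (iii) *)
    is_lim m p_infty p_infty /\
    is_lim (fun t => t / m t) p_infty p_infty /\
    (* (iv) *)
    reg_var m (gamma / (gamma + 1)) /\
    (forall L L1s : R -> R,
       (forall t, 1 <= t -> U t = Rpower t gamma * L t) ->
       slow_var L ->
       debruijn_conj (fun t => L (Rpower t (1 / (1 + gamma)))) L1s ->
       is_lim (fun t => m t / (Rpower t (gamma / (gamma + 1))
                               * Rpower (L1s t) (- (1 / (1 + gamma)))))
              p_infty (Finite 1)).
Proof.
  pose proof (div_U_phi_inv U U' Hpos Hinc Hinf HC1) as Hdiv.
  exists (fun t => U (phi_inv U t)).
  split; [| split; [| split; [| split; [| split; [| split]]]]].
  - intros t Ht. rewrite (Hdiv t Ht).
    split; [exact (U_phi_inv_ge_1 U U' Hpos Hinc Hinf HC1 t Ht) |].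
    split; [apply (phi_inv_spec U U' Hpos Hinc Hinf HC1 t Ht) | split; [reflexivity |]].
    intros y Hy Hty HUy.
    assert (Hx : t / y = phi_inv U t).
    { apply (phi_inv_unique U U' Hpos Hinc Hinf HC1); [exact Ht | exact Hty |].
      rewrite HUy. field. lra. }
    rewrite <- Hx, HUy. reflexivity.
  - exact (U_phi_inv_incr U U' Hpos Hinc Hinf HC1).
  - eexists. exact (U_phi_inv_C1 U U' Hpos Hinc Hinf HC1).
  - exact (filterlim_comp _ _ _ _ _ _ _ _ (phi_inv_tends_to_infty U U' Hpos Hinc Hinf HC1) Hinf).
  - apply (filterlim_ext_loc (phi_inv U)); [| exact (phi_inv_tends_to_infty U U' Hpos Hinc Hinf HC1)].
    apply (filter_imp (m_dom U)); [| exact (m_dom_eventually U U' Hpos Hinc Hinf HC1)].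
    intros t Ht. symmetry. exact (Hdiv t Ht).
  - exact (U_phi_inv_reg_var U U' Hpos Hinc Hinf HC1 gamma Hgamma Hrv).
  - intros L L1s HUL _ Hconj. exact (U_phi_inv_debruijn U U' Hpos Hinc Hinf HC1 gamma L L1s Hgamma HUL Hconj).
Qed.
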